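(* Let $G$ be a graph on $2n$ vertices and let $\mathbf{x}$ be a perfect fractional matching of $G$. Let $b>1$ and $M:=\{e\in E(G):\mathbf{x}_e\geq\frac bn\}$. Suppose $h(\mathbf{x})\geq n\log\frac n2$. Then $\sum_{e\in M}\mathbf{x}_e\leq\frac{4n}{\log b}$.
   Context: $\log=\log_2$. A perfect fractional matching of a graph $G$ is $\mathbf{x}\colon E(G)\to\mathbb{R}_{\geq0}$ with $\sum_{w\in N(v)}\mathbf{x}_{vw}=1$ for every vertex $v$. Its entropy is $h(\mathbf{x})=\sum_{e\in E(G)}\mathbf{x}_e\log\frac1{\mathbf{x}_e}$ (with $0\log\frac10:=0$). *)

From mathcomp Require Import all_boot all_order all_algebra.
From mathcomp Require Import all_classical all_reals all_analysis.
Set Implicit Arguments. Unset Strict Implicit. Unset Printing Implicit Defensive.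
Import Order.TTheory GRing.Theory Num.Theory.
Local Open Scope ring_scope.

Definition simple_graph (T : finType) (E : {set {set T}}) : Prop :=
  forall e, e \in E -> #|e| = 2%N.

Definition perfect_fractional_matching (R : realType) (T : finType)
  (E : {set {set T}}) (x : {set T} -> R) : Prop :=
  (forall e, e \in E -> 0 <= x e) /\
  (forall v : T, \sum_(e in E | v \in e) x e = 1).

Definition log2 (R : realType) (t : R) : R := ln t / ln 2.

Definition entropy (R : realType) (T : finType)
  (E : {set {set T}}) (x : {set T} -> R) : R :=
  \sum_(e in E) (if x e == 0 then 0 else x e * log2 (x e)^-1).

From mathcomp Require Import all_boot all_order all_algebra.
From mathcomp Require Import all_classical all_reals all_analysis.
From mathcomp Require Import lra zify.
(* Measure entropy in nats and split the edges at the threshold [b/n]. A heavy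
   edge contributes at most [x_e ln (n/b)]. Any other edge lies below the tangent
   line of [y ln (1/y)] at [y = 1/(2n)], i.e. contributes at most
   [x_e (ln (2n) - 1) + 1/(2n)], and these constants add up to at most [n] since
   a graph on [2n] vertices has at most [2n^2] edges. As the weights sum to [n],
   comparing with [h(x) >= n log (n/2)] leaves [S ln b <= 3 n ln 2] for the heavy
   mass [S]. *)

Set Implicit Arguments.
Unset Strict Implicit.
Unset Printing Implicit Defensive.

Import Order.TTheory GRing.Theory Num.Theory.
Local Open Scope ring_scope.

Section SimpleGraphs.
Variables (T : finType) (E : {set {set T}}).
Hypothesis E_simple : simple_graph E.

Lemma card_simple_graph_edges : (#|E| <= 'C(#|T|, 2))%N.
Proof.
rewrite -card_draws; apply: subset_leq_card.
by apply/fintype.subsetP => e eE; rewrite inE E_simple.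
Qed.

Lemma sum_fractional_matching (R : realType) (x : {set T} -> R) :
  perfect_fractional_matching E x -> (\sum_(e in E) x e) *+ 2 = #|T|%:R.
Proof.
case=> _ x_vertex; rewrite -sumrMnl -[RHS]sumr_const.
under [RHS]eq_bigr => v _ do rewrite -(x_vertex v).
rewrite (exchange_big_dep (mem E)) /= => [|v e _ /andP[] //].
apply: eq_bigr => e eE.
by rewrite (eq_bigl (mem e)) => [|v]; rewrite ?sumr_const ?E_simple ?eE.
Qed.

End SimpleGraphs.

Lemma card_edges_ord_double (n : nat) (E : {set {set 'I_(2 * n)}}) :
  simple_graph E -> (#|E| <= 2 * n * n)%N.
Proof.
move=> /card_simple_graph_edges; rewrite card_ord => /leq_trans; apply.
by rewrite bin2; nia.
Qed.

Section EntropyBounds.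
Variable R : realType.

Lemma ln_le_subr1 (y : R) : 0 < y -> ln y <= y - 1.
Proof.
move=> y_gt0; have := @le_ln1Dx R (y - 1).
by rewrite addrCA subrr addr0; apply; lra.
Qed.

Lemma ln2_ge_half : 2^-1 <= ln (2 : R).
Proof. by have := @ln_le_subr1 2^-1; rewrite lnV ?posrE //; lra. Qed.

(* The tangent line at [y = c^-1] of the concave function [y * ln y^-1]. *)
Lemma mul_lnV_le_tangent (c y : R) : 0 < c -> 0 <= y ->
  y * ln y^-1 <= y * (ln c - 1) + c^-1.
Proof.
move=> c_gt0; rewrite le_eqVlt => /predU1P[<-|y_gt0].
  by rewrite !mul0r add0r invr_ge0 ltW.
have cy_gt0 : 0 < (c * y)^-1 by rewrite invr_gt0 mulr_gt0.
have := ln_le_subr1 cy_gt0.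
rewrite invfM lnM ?posrE ?invr_gt0 // !lnV ?posrE // => /(ler_wpM2l (ltW y_gt0)).
rewrite !mulrDr !mulrN mulrCA mulfV ?gt_eqF // !mulr1; lra.
Qed.

Lemma entropyE (T : finType) (E : {set {set T}}) (x : {set T} -> R) :
  entropy E x = (\sum_(e in E) x e * ln (x e)^-1) / ln 2.
Proof.
rewrite /entropy mulr_suml; apply: eq_bigr => e _.
by case: eqP => [->|_]; rewrite ?mul0r // /log2 mulrA.
Qed.

Section HeavyEdges.
Variables (T : finType) (E : {set {set T}}) (x : {set T} -> R).
Hypothesis x_ge0 : forall e, e \in E -> 0 <= x e.

Lemma sum_mul_lnV_le_heavy_light (a c : R) : 0 < a -> 0 < c ->
  \sum_(e in E) x e * ln (x e)^-1 <=
    (\sum_(e in E | a <= x e) x e) * ln a^-1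
    + (\sum_(e in E | x e < a) x e) * (ln c - 1) + #|E|%:R / c.
Proof.
move=> a_gt0 c_gt0; rewrite (bigID (fun e => a <= x e)) /= -addrA.
apply: lerD.
  rewrite mulr_suml; apply: ler_sum => e /andP[eE a_le_xe].
  have xe_gt0 : 0 < x e := lt_le_trans a_gt0 a_le_xe.
  rewrite ler_wpM2l ?x_ge0 // ler_ln ?posrE ?invr_gt0 //.
  by rewrite lef_pV2 ?posrE.
apply: (@le_trans _ _ (\sum_(e in E | ~~ (a <= x e)) (x e * (ln c - 1) + c^-1))).
  by apply: ler_sum => e /andP[eE _]; apply: mul_lnV_le_tangent; rewrite ?x_ge0.
rewrite big_split /= -mulr_suml (eq_bigl (fun e => (e \in E) && (x e < a))) => [|e].
  rewrite lerD2l sumr_const -[c^-1 *+ _]mulr_natl ler_wpM2r ?invr_ge0 ?(ltW c_gt0) // ler_nat.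
  by apply: subset_leq_card; apply/fintype.subsetP => e /andP[].
by rewrite ltNge.
Qed.

End HeavyEdges.

End EntropyBounds.

Theorem lemma4p3 (R : realType) (n : nat) (E : {set {set 'I_(2 * n)}})
  (x : {set 'I_(2 * n)} -> R) (b : R) :
  simple_graph E ->
  perfect_fractional_matching E x ->
  1 < b ->
  n%:R * log2 (n%:R / 2) <= entropy E x ->
  \sum_(e in E | b / n%:R <= x e) x e <= 4 * n%:R / log2 b.
Proof.
move=> E_simple x_pfm b_gt1 x_entropy; have [x_ge0 _] := x_pfm.
set N : R := n%:R; set S := \sum_(e in E | _) _.
have sum_x : \sum_(e in E) x e = N.
  have := sum_fractional_matching E_simple x_pfm.
  by rewrite card_ord natrM mulr2n; lra.
have sum_light : \sum_(e in E | x e < b / N) x e = N - S.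
  rewrite -[X in X - S]sum_x [in RHS](bigID (fun e => b / N <= x e)) /= addrAC subrr add0r.
  by apply: eq_bigl => e; rewrite ltNge.
have S_ge0 : 0 <= S by apply: sumr_ge0 => e /andP[/x_ge0].
have S_le_N : S <= N.
  rewrite -sum_x (bigID (fun e => b / N <= x e)) lerDl.
  by apply: sumr_ge0 => e /andP[/x_ge0].
have [n0|n_gt0] := posnP n.
  by move: S_le_N; rewrite /N n0 mulr0 mul0r.
have N_gt0 : 0 < N by rewrite ltr0n.
have ln2_gt0 : 0 < ln (2 : R) by rewrite ln_gt0 ?ltr1n.
have lnb_gt0 : 0 < ln b by rewrite ln_gt0.
have card_E : #|E|%:R / (2 * N) <= N.
  rewrite ler_pdivrMr ?mulr_gt0 // /N -!natrM ler_nat mulnCA mulnA.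
  exact: card_edges_ord_double.
set G := \sum_(e in E) x e * ln (x e)^-1.
have G_lb : N * (ln N - ln 2) <= G.
  move: x_entropy; rewrite entropyE /log2 ln_div ?posrE // mulrA.
  by rewrite ler_pM2r ?invr_gt0.
have G_ub : G <= S * (ln N - ln b) + (N - S) * (ln 2 + ln N - 1) + N.
  have b_gt0 : 0 < b := lt_trans ltr01 b_gt1.
  have bN_gt0 : 0 < b / N by rewrite divr_gt0.
  apply: le_trans (sum_mul_lnV_le_heavy_light x_ge0 bN_gt0 (mulr_gt0 (ltr0Sn R 1) N_gt0)) _.
  by rewrite sum_light -/S invf_div ln_div ?lnM ?posrE //; lra.
rewrite /log2 invf_div mulrA ler_pdivlMr //.
(* [G_lb] and [G_ub] give [S ln b <= 2 N ln 2 + S (1 - ln 2)], and the last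
   term is at most [N ln 2] because [S <= N] and [ln 2 >= 1/2]. *)
have := ln2_ge_half R.
nra.
Qed.
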